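(* If $[\alpha]_{K\times K}\in\mathcal A_{\mathrm{SLS}}$, then for every $S\subseteq[K]$ there exists a p-optimal cyclic partition of $S$ containing at most one trivial cycle (cycle of length $1$).
   Context: SLS regime: $\mathcal A_{\mathrm{SLS}}=\{[\alpha]\in\mathbb R_+^{K\times K}:\ \alpha_{ii}\ge\max(\alpha_{ij},\alpha_{ki},\alpha_{ik}+\alpha_{ji}-\alpha_{jk})\ \forall i,j,k\in[K],\ i\notin\{j,k\}\}$. Cycles: a cycle $\pi=(i_1\to\cdots\to i_M)$, $M\ge1$, is an ordered list of distinct indices of $[K]$, read cyclically ($i_{M+1}=i_1$); $\{\pi\}$ its set; $\Pi$ the set of all cycles; a cycle of length $1$ is called trivial; a cyclic partition of $S$ is a collection of disjoint cycles whose sets have union $S$. $\delta_{ij}=\alpha_{ii}-\alpha_{ji}$ ($i\neq j$), $\delta_{ii}=0$; $\Delta_\pi=\sum_{m=1}^M\delta_{i_mi_{m+1}}$ if $M>1$, $\Delta_\pi=\alpha_{i_1i_1}$ if $M=1$. For $S\subseteq[K]$, $\mathcal D_{\mathrm{P\text{-}TIN}}(S)=\{(d_k)_{k\in[K]}: d_k=0\ (k\notin S),\ d_k\ge0\ (k\in S),\ \sum_{k\in\{\pi\}}d_k\le\Delta_\pi\ \forall \pi\in\Pi,\ \{\pi\}\subseteq S\}$ and $\mathcal D_{\Sigma,\mathrm{P\text{-}TIN}}(S)$ is the maximum of $\sum_{k\in S}d_k$ over it. A cyclic partition $\pi_1,\dots,\pi_n$ of $S$ is p-optimal if $\mathcal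 D_{\Sigma,\mathrm{P\text{-}TIN}}(S)=\sum_{l=1}^n\Delta_{\pi_l}$. *)

From HB Require Import structures.
From mathcomp Require Import all_boot all_order all_algebra.
Set Implicit Arguments. Unset Strict Implicit. Unset Printing Implicit Defensive.
Import Order.TTheory GRing.Theory Num.Theory.
Local Open Scope ring_scope.

Section Defs.
Variables (R : realFieldType) (K : nat).
Variable alpha : 'I_K -> 'I_K -> R.

Definition in_SLS : Prop :=
  (forall i j, 0 <= alpha i j) /\
  (forall i j k, i != j -> i != k ->
     Num.max (alpha i j) (Num.max (alpha k i) (alpha i k + alpha j i - alpha j k))
       <= alpha i i).

(* a cycle (i_1 -> ... -> i_M): a nonempty duplicate-free list read cyclically *)
Definition is_cycle (c : seq 'I_K) : bool := (0 < size c)%N && uniq c.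

Definition delta (i j : 'I_K) : R := if i == j then 0 else alpha i i - alpha j i.

Definition Delta (c : seq 'I_K) : R :=
  if c is [:: i] then alpha i i
  else \sum_(m <- c) delta m (next c m).

Definition in_DPTIN (S : {set 'I_K}) (d : 'I_K -> R) : Prop :=
  (forall k, k \notin S -> d k = 0) /\
  (forall k, k \in S -> 0 <= d k) /\
  (forall c : seq 'I_K, is_cycle c -> {subset c <= S} ->
     \sum_(k <- c) d k <= Delta c).

Definition is_DSigma (S : {set 'I_K}) (v : R) : Prop :=
  (exists2 d, in_DPTIN S d & \sum_(k in S) d k = v) /\
  (forall d, in_DPTIN S d -> \sum_(k in S) d k <= v).

Definition cyclic_partition (S : {set 'I_K}) (P : seq (seq 'I_K)) : Prop :=
  all is_cycle P /\ uniq (flatten P) /\ (forall k, (k \in flatten P) = (k \in S)).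

Definition p_optimal (S : {set 'I_K}) (P : seq (seq 'I_K)) : Prop :=
  cyclic_partition S P /\ is_DSigma S (\sum_(c <- P) Delta c).
End Defs.

From HB Require Import structures.
From mathcomp Require Import all_boot all_order all_algebra fingroup perm.
From mathcomp Require Import ring lra.
Set Implicit Arguments. Unset Strict Implicit. Unset Printing Implicit Defensive.
Import Order.TTheory GRing.Theory Num.Theory.
Local Open Scope ring_scope.

(* Weight the ordered pairs of S by  w i j = delta_ij  (i <> j)  and
   w i i = beta_i := min (alpha_ii, min_{j in S, j <> i} delta_ij + delta_ji).
   Under SLS, delta is nonnegative, bounded by alpha_ii and satisfies a triangle
   inequality, so w is a nonnegative "triangle-like" weight and the w-weight of
   every cycle is at most its Delta.  Let s be a permutation of S minimising the
   assignment cost  sum_x w x (s x),  and with fewest fixed points among these.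
   - Assignment duality: minimality makes all reduced-cost cycles nonnegative,
     so shortest-path potentials u exist, and d_i = w (s^-1 i) i + u_i - u_(s^-1 i)
     is a point of D_P-TIN(S) of total value cost(s).
   - Conversely every point of D_P-TIN(S) has value at most sum Delta over any
     cyclic partition of S.
   - An exchange argument (transposing a fixed point with another point) shows
     that beta_f = alpha_ff at fixed points and that s has at most one of them.
   Hence the orbits of s form a p-optimal cyclic partition of S with at most one
   trivial cycle. *)

Lemma bigmin_attained (disp : Order.disp_t) (T : orderType disp) (I : Type)
    (r : seq I) (P : pred I) (F : I -> T) (x0 : T) :
  \big[Order.min/x0]_(i <- r | P i) F i = x0 \/
  exists2 i, P i & \big[Order.min/x0]_(i <- r | P i) F i = F i.
Proof.
elim/big_ind: _ => [|a b Ha Hb|i Pi]; [by left | | by right; exists i].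
by case: leP.
Qed.

Section CyclicSums.
Variable T : eqType.

Lemma sum_next (V : nmodType) (q : seq T) (F : T -> V) : uniq q ->
  \sum_(m <- q) F (next q m) = \sum_(m <- q) F m.
Proof.
move=> Uq; rewrite -(big_map (next q) xpredT F); apply: perm_big.
apply: uniq_perm => //.
  by rewrite map_inj_in_uniq // => x y _ _; apply: (can_inj (prev_next Uq)).
move=> x; apply/mapP/idP => [[y yq ->]|xq]; first by rewrite mem_next.
by exists (prev q x); rewrite ?mem_prev ?next_prev.
Qed.

Lemma next_neq (q : seq T) m : uniq q -> m \in q -> (1 < size q)%N ->
  next q m != m.
Proof.
move=> Uq mq sq; case/rot_to: mq => i q' Eq.
rewrite -(next_rot i Uq) Eq.
have : uniq (m :: q') by rewrite -Eq rot_uniq.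
have : (1 < size (m :: q'))%N by rewrite -Eq size_rot.
case: q' {Eq} => [|y q''] //= _; rewrite eqxx inE negb_or.
by case/andP=> /andP[/negbTE ym _] _; rewrite eq_sym ym.
Qed.

End CyclicSums.

Section PathWeights.
Variables (T : eqType) (V : nmodType) (c : T -> T -> V).

Fixpoint path_weight (p : seq T) : V :=
  if p is x :: ((y :: _) as t) then c x y + path_weight t else 0.

Definition cycle_weight (q : seq T) : V := \sum_(m <- q) c m (next q m).

Lemma path_weight_rcons x p y :
  path_weight (rcons (x :: p) y) = path_weight (x :: p) + c (last x p) y.
Proof.
elim: p x => [|z p IH] x /=; first by rewrite addr0 add0r.
by have /= -> := IH z; rewrite addrA.
Qed.

Lemma path_weight_cat p1 y p2 :
  path_weight (p1 ++ y :: p2) = path_weight (rcons p1 y) + path_weight (y :: p2).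
Proof.
elim: p1 => [|a p1 IH]; first by rewrite /= add0r.
case: p1 IH => [|b p1] IH; first by rewrite /= addr0.
by have /= -> := IH; rewrite /= addrA.
Qed.

Lemma path_weight_fpath (f : T -> T) x p :
  fpath f x p -> path_weight (x :: p) = \sum_(m <- belast x p) c m (f m).
Proof.
elim: p x => [|y p IH] x /=; first by rewrite big_nil.
case/andP=> /eqP fx fp; rewrite big_cons -IH // fx.
by case: p {IH fp}.
Qed.

Lemma cycle_weight_path y p : uniq (y :: p) ->
  cycle_weight (y :: p) = path_weight (y :: p) + c (last y p) y.
Proof.
move=> U; have /path_weight_fpath := cycle_next U.
rewrite belast_rcons /cycle_weight => <-.
by rewrite -/(rcons (y :: p) y) path_weight_rcons.
Qed.

End PathWeights.

Section Potentials.
Variables (R : realDomainType) (T : finType) (S0 : {set T}) (c : T -> T -> R).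

Fixpoint seqs n : seq (seq T) :=
  if n is n'.+1 then [::] :: [seq x :: p | x <- enum T, p <- seqs n'] else [:: [::]].

Lemma mem_seqs n p : (size p <= n)%N -> p \in seqs n.
Proof.
elim: n p => [|n IH] [|x p] //= sp; rewrite inE; apply/orP; right.
by apply/allpairsP; exists (x, p); rewrite mem_enum IH.
Qed.

(* Simple paths inside S0 ending at i, and the potential of i: the least
   weight of such a path (the trivial path [:: i] has weight 0). *)
Definition ends_at i (p : seq T) :=
  [&& uniq p, all (mem S0) p, p != [::] & last i p == i].

Definition potential i :=
  \big[Num.min/0]_(p <- seqs #|T| | ends_at i p) path_weight c p.

Lemma potential_le i p : ends_at i p -> potential i <= path_weight c p.
Proof.
move=> ip; apply: ge_bigmin_seq => //; apply: mem_seqs.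
case/and4P: ip => Up _ _ _; rewrite -(card_uniqP Up); exact: max_card.
Qed.

Lemma potential_attained i : i \in S0 ->
  exists2 p, ends_at i p & potential i = path_weight c p.
Proof.
move=> iS; case: (bigmin_attained (seqs #|T|) (ends_at i) (path_weight c) 0).
  by exists [:: i]; rewrite /ends_at /= ?iS ?eqxx.
by case=> p ip pot_p; exists p.
Qed.

(* Take an
   optimal path p to k: if i is not on p, extend p by i; otherwise cut p at i,
   the prefix ends at i and the rest closes a nonnegative cycle through i. *)
Hypothesis cycles_nonneg :
  forall q, uniq q -> {subset q <= S0} -> 0 <= cycle_weight c q.

Lemma potential_bellman i k : i \in S0 -> k \in S0 ->
  potential i <= potential k + c k i.
Proof.
move=> iS kS; have [p kp ->] := potential_attained kS.
case/and4P: kp => Up Sp p0 /eqP lp.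
have [ip|nip] := boolP (i \in p); last first.
  case: p Up Sp p0 lp nip => [//|x p] Up Sp _ lp nip.
  have ends : ends_at i (rcons (x :: p) i).
    by rewrite /ends_at rcons_uniq nip Up all_rcons Sp last_rcons eqxx /= iS.
  by apply: le_trans (potential_le ends) _; rewrite path_weight_rcons -lp.
case/splitPr: ip Up Sp lp {p0} => p1 p2.
rewrite cat_uniq all_cat => /and3P[Up1 p1_p2 Ui2] /andP[Sp1 Si2] lp.
have ip1 : i \notin p1.
  by apply: contra p1_p2 => ip1; apply/hasP; exists i; rewrite ?mem_head.
have ends : ends_at i (rcons p1 i).
  rewrite /ends_at last_rcons eqxx rcons_uniq Up1 all_rcons Sp1 /= iS ip1.
  by case: (p1).
have cyc_ge0 : 0 <= cycle_weight c (i :: p2).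
  by apply: cycles_nonneg => // x /(allP Si2).
have li : last i p2 = k by rewrite -lp last_cat.
rewrite cycle_weight_path // li in cyc_ge0.
apply: le_trans (potential_le ends) _; rewrite path_weight_cat -addrA.
by rewrite lerDl.
Qed.

End Potentials.

Lemma potentials_exist (R : realDomainType) (T : finType) (S0 : {set T})
    (c : T -> T -> R) :
  (forall q, uniq q -> {subset q <= S0} -> 0 <= cycle_weight c q) ->
  exists u : T -> R, forall i k, i \in S0 -> k \in S0 -> u i <= u k + c k i.
Proof. by move=> nonneg; exists (potential S0 c); apply: potential_bellman. Qed.

Section Assignment.
Variables (R : realDomainType) (T : finType) (S : {set T}) (w : T -> T -> R).

Definition cost (s : {perm T}) : R := \sum_(x in S) w x (s x).
Definition nfix (s : {perm T}) : nat := #|[set x in S | s x == x]|.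

(* The triangle inequality through points i of S, required only when the two
   neighbours k, l of i are both equal to i or both different from it; this is
   what makes the dual solution below nonnegative. *)
Definition triangular : Prop :=
  forall k i l, i \in S -> (k == i) = (i == l) -> w k l <= w k i + w i l.

Lemma fixed_not_image (s : {perm T}) f j : s f = f -> f != j -> s j != f.
Proof. by move=> sf; apply: contra => /eqP sj; rewrite -sf in sj; rewrite (perm_inj sj). Qed.

Lemma sum_perm_on (s : {perm T}) (F : T -> R) : perm_on S s ->
  \sum_(x in S) F (s x) = \sum_(x in S) F x.
Proof.
move=> ps; rewrite big_mkcond [RHS]big_mkcond /=.
rewrite [RHS](reindex_inj (@perm_inj _ s)) /=.
by apply: eq_bigr => x _; rewrite (perm_closed _ ps).
Qed.

Lemma sum_supported (q : seq T) (h : T -> R) : uniq q -> {subset q <= S} ->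
  (forall x, x \notin q -> h x = 0) -> \sum_(x in S) h x = \sum_(x <- q) h x.
Proof.
move=> Uq qS h0; rewrite (bigID (mem q)) /= [X in _ + X]big1 ?addr0; last first.
  by move=> x /andP[_ /h0].
rewrite big_uniq //; apply: eq_bigl => x /=; apply/andP/idP => [[]//|xq].
by split=> //; apply: qS.
Qed.

Lemma optimal_assignment_exists : exists s : {perm T},
  [/\ perm_on S s, forall t, perm_on S t -> cost s <= cost t &
      forall t, perm_on S t -> cost t <= cost s -> (nfix s <= nfix t)%N].
Proof.
case: (arg_minP cost (perm_on1 S)) => s0 ps0 min0.
pose Q t := perm_on S t && (cost t == cost s0).
have Qs0 : Q s0 by rewrite /Q ps0 eqxx.
case: (arg_minnP nfix Qs0) => s /andP[ps /eqP cs] fixmin.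
exists s; split=> // [t pt|t pt ct]; first by rewrite cs; apply: min0.
apply: fixmin; rewrite /Q pt /=; apply/eqP/le_anti.
by rewrite -cs ct cs min0.
Qed.

Section Optimal.
Variable s : {perm T}.
Hypothesis s_on : perm_on S s.
Hypothesis s_min : forall t, perm_on S t -> cost s <= cost t.

(* Reduced cost of rerouting the edge k -> s k to i -> s k. *)
Definition reduced k i := w i (s k) - w k (s k).

(* Optimality: rotating s along any cycle q of S cannot lower the cost. *)
Lemma reduced_cycles_nonneg q : uniq q -> {subset q <= S} ->
  0 <= cycle_weight reduced q.
Proof.
move=> Uq qS.
have inj : injective (fun x => s (prev q x)).
  by move=> x y /perm_inj /(can_inj (next_prev Uq)).
pose t := perm inj; have tE x : t x = s (prev q x) by rewrite permE.
have t_on : perm_on S t.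
  apply/subsetP => x; rewrite inE; apply: contraR => xS.
  have xq : x \notin q by apply: contra xS; apply: qS.
  by rewrite tE prev_nth (negbTE xq) (out_perm s_on xS).
have := s_min t_on; rewrite -subr_ge0 /cost -sumrB.
rewrite (@sum_supported q) //; last first.
  by move=> x xq; rewrite tE prev_nth (negbTE xq) subrr.
rewrite /cycle_weight /reduced big_split /= sumrB.
rewrite -(@sum_next _ _ q (fun x => w x (t x))) // sumrN.
by under eq_bigr do rewrite tE prev_next //.
Qed.

Section Dual.
Variable u : T -> R.
Hypothesis u_pot : forall i k, i \in S -> k \in S -> u i <= u k + reduced k i.

Definition dual i := if i \in S then w (s^-1%g i) i + u i - u (s^-1%g i) else 0.

Lemma inv_in_S i : (s^-1%g i \in S) = (i \in S).
Proof. exact: (perm_closed _ (perm_onV s_on)). Qed.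

Lemma dual_le m j : m \in S -> j \in S ->
  u m + (w (s^-1%g j) j - u (s^-1%g j)) <= w m j.
Proof.
move=> mS jS; have := u_pot mS (etrans (inv_in_S j) jS).
by rewrite /reduced permKV => hu; lra.
Qed.

Lemma dual_ge0 : triangular -> forall i, 0 <= dual i.
Proof.
move=> wtri i; rewrite /dual; case: ifP => iS //.
set k := s^-1%g i.
have kS : k \in S by rewrite inv_in_S.
have e : (k == i) = (i == s i).
  apply/eqP/eqP => [ki|si]; first by rewrite -[in RHS]ki /k permKV.
  by rewrite /k {1}si permK.
have := u_pot kS iS; have := wtri _ _ _ iS e; rewrite /reduced => ht hu; lra.
Qed.

Lemma dual_cycle_le q : uniq q -> {subset q <= S} ->
  \sum_(k <- q) dual k <= \sum_(m <- q) w m (next q m).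
Proof.
move=> Uq qS; pose v j := w (s^-1%g j) j - u (s^-1%g j).
have -> : \sum_(k <- q) dual k = \sum_(k <- q) u k + \sum_(k <- q) v k.
  rewrite -big_split; apply: eq_big_seq => k kq.
  by rewrite /dual qS // /v /=; ring.
rewrite -(@sum_next _ _ q v Uq) -big_split /= big_seq [X in _ <= X]big_seq.
by apply: ler_sum => m mq; apply: dual_le; apply: qS; rewrite ?mem_next.
Qed.

Lemma dual_sum : \sum_(i in S) dual i = cost s.
Proof.
pose g x := w x (s x) + u (s x) - u x.
have -> : \sum_(i in S) dual i = \sum_(i in S) g (s^-1%g i).
  by apply: eq_bigr => i iS; rewrite /dual /g iS permKV.
rewrite (sum_perm_on g (perm_onV s_on)) /g sumrB big_split /=.
by rewrite (sum_perm_on u s_on) addrK.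
Qed.

End Dual.

Lemma assignment_dual : triangular ->
  exists d : T -> R, [/\ forall i, i \notin S -> d i = 0, forall i, 0 <= d i,
    forall q, uniq q -> {subset q <= S} ->
      \sum_(k <- q) d k <= \sum_(m <- q) w m (next q m)
    & \sum_(i in S) d i = cost s].
Proof.
move=> wtri; have [u u_pot] := potentials_exist reduced_cycles_nonneg.
exists (dual u); split.
- by move=> i iS; rewrite /dual (negbTE iS).
- exact: dual_ge0.
- exact: dual_cycle_le.
- exact: dual_sum.
Qed.

Hypothesis s_fewest : forall t, perm_on S t -> cost t <= cost s -> (nfix s <= nfix t)%N.

(* Exchange: transposing a fixed point f with another point j must strictly
   increase the cost, otherwise it would give a cheaper-or-equal assignment
   with fewer fixed points. *)
Lemma fixed_point_exchange f j : f \in S -> j \in S -> f != j -> s f = f ->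
  w j (s j) + w f f < w j f + w f (s j).
Proof.
move=> fS jS fj sf; rewrite ltNge; apply/negP => hw.
pose t := (tperm f j * s)%g; have tE x : t x = s (tperm f j x) by rewrite permM.
have t_on : perm_on S t.
  apply: perm_onM s_on; apply: subset_trans (tperm_on f j) _.
  by apply/subsetP => x; rewrite !inE => /orP[] /eqP ->.
have sjf : s j != f := fixed_not_image sf fj.
have cheaper : cost t <= cost s.
  rewrite -subr_ge0 /cost -sumrB (@sum_supported [:: f; j]) /=; first last.
  - by move=> x; rewrite !inE negb_or => /andP[xf xj]; rewrite tE tpermD 1?eq_sym // subrr.
  - by move=> x; rewrite !inE => /orP[] /eqP ->.
  - by rewrite inE andbT.
  by rewrite !big_cons big_nil addr0 !tE tpermL tpermR sf; lra.
suff : (nfix t < nfix s)%N by rewrite ltnNge s_fewest.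
apply: proper_card; apply/properP; split.
  apply/subsetP => x; rewrite !inE => /andP[xS /eqP tx]; rewrite xS /=.
  have [xf|xf] := eqVneq x f; first by rewrite xf tE tpermL in tx; rewrite tx eqxx in sjf.
  have [xj|xj] := eqVneq x j; first by rewrite xj tE tpermR sf in tx; rewrite tx eqxx in fj.
  by rewrite -[X in _ == X]tx tE tpermD 1?eq_sym.
exists f; first by rewrite inE fS sf eqxx.
by rewrite inE fS tE tpermL /= sjf.
Qed.

End Optimal.
End Assignment.

Section Orbits.
Variables (T : finType) (S : {set T}) (s : {perm T}).
Hypothesis s_on : perm_on S s.

Definition orbits : seq (seq T) :=
  [seq orbit s x | x <- [seq x <- enum S | froots s x]].

Let closedS : closed (frel s) S.
Proof. by move=> x y /eqP <-; rewrite (perm_closed _ s_on). Qed.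

Let symS : connect_sym (frel s).
Proof. by move=> x y; apply: (fconnect_sym (@perm_inj _ s)). Qed.

Let roots_uniq : uniq [seq x <- enum S | froots s x].
Proof. by rewrite filter_uniq ?enum_uniq. Qed.

Let roots_in x : x \in [seq x <- enum S | froots s x] -> x \in S.
Proof. by rewrite mem_filter mem_enum => /andP[]. Qed.

Lemma orbits_cycles : all (fun c => (0 < size c)%N && uniq c) orbits.
Proof.
apply/allP => c /mapP[x _ ->]; rewrite orbit_uniq andbT.
by rewrite size_orbit fingraph.order_gt0.
Qed.

Lemma mem_flatten_orbits y : (y \in flatten orbits) = (y \in S).
Proof.
apply/flattenP/idP => [[c /mapP[x /roots_in xS ->] yx] | yS].
  by rewrite -(closed_connect closedS (x := x) (y := y)) // fconnect_orbit.
exists (orbit s (froot s y)).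
  apply: map_f; rewrite mem_filter mem_enum (roots_root symS) /=.
  by rewrite -(closed_connect closedS (connect_root _ y)).
by rewrite -fconnect_orbit symS connect_root.
Qed.

Lemma uniq_flatten_orbits : uniq (flatten orbits).
Proof.
rewrite /orbits; have : all (froots s) [seq x <- enum S | froots s x].
  exact: filter_all.
elim: [seq x <- enum S | froots s x] roots_uniq => [|r rs IH] //=.
case/andP=> nr ur /andP[rr ar]; rewrite cat_uniq orbit_uniq IH // andbT.
apply/hasP => -[y /flattenP[c /mapP[r' r'rs ->] yr'] yr].
move: yr yr'; rewrite -!fconnect_orbit => /(fingraph.rootP symS) e1 /(fingraph.rootP symS) e2.
have rr' : r = r'.
  by move/eqP: rr => <-; rewrite e1 -e2; move/allP: ar => /(_ r' r'rs) /eqP.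
by rewrite rr' r'rs in nr.
Qed.

Lemma sum_orbits (V : nmodType) (F : T -> V) :
  \sum_(c <- orbits) \sum_(m <- c) F m = \sum_(x in S) F x.
Proof.
rewrite -big_flatten /= big_uniq ?uniq_flatten_orbits //.
by apply: eq_bigl => y; rewrite /= mem_flatten_orbits.
Qed.

Lemma orbit_singleton x : size (orbit s x) = 1%N -> orbit s x = [:: x] /\ s x = x.
Proof.
have xo : x \in orbit s x := in_orbit _ x.
have sxo : s x \in orbit s x by apply: mem_orbit.
by case: (orbit s x) xo sxo => [|a [|b l]] //=; rewrite !inE => /eqP-> /eqP->.
Qed.

Lemma count_trivial_orbits :
  (forall f j, f \in S -> j \in S -> s f = f -> s j = j -> f = j) ->
  (count (fun c => size c == 1%N) orbits <= 1)%N.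
Proof.
move=> one_fix; rewrite /orbits count_map.
have : {subset [seq x <- enum S | froots s x] <= S} by move=> x /roots_in.
elim: [seq x <- enum S | froots s x] roots_uniq => [|r rs IH] //= /andP[nr ur] sub.
have sub' : {subset rs <= S} by move=> x xr; apply: sub; rewrite inE xr orbT.
have [/orbit_singleton[_ fr]|_] := eqVneq (size (orbit s r)) 1%N; last first.
  by rewrite add0n IH.
suff -> : count (preim (orbit s) (fun c => size c == 1%N)) rs = 0%N by [].
apply/eqP; rewrite -leqn0 leqNgt -has_count; apply/hasP => -[y yr /=].
move/eqP/orbit_singleton => [_ fy].
by move: nr; rewrite (one_fix r y (sub r (mem_head _ _)) (sub' y yr) fr fy) yr.
Qed.

End Orbits.

Section SLS.
Variables (R : realFieldType) (K : nat) (alpha : 'I_K -> 'I_K -> R).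
Hypothesis alpha_SLS : in_SLS alpha.
Local Notation dl := (delta alpha).

Lemma alpha_ge0 i j : 0 <= alpha i j.
Proof. by case: alpha_SLS. Qed.

(* The first two SLS conditions with k = j: the diagonal dominates its column. *)
Lemma alpha_le_diag i j : i != j -> alpha j i <= alpha i i.
Proof.
move=> ij; case: alpha_SLS => _ /(_ i j j ij ij).
by rewrite !ge_max => /and3P[].
Qed.

Lemma delta_ge0 i j : 0 <= dl i j.
Proof.
rewrite /delta; case: eqP => [//|/eqP ij].
by rewrite subr_ge0 alpha_le_diag.
Qed.

Lemma delta_le_diag i j : dl i j <= alpha i i.
Proof.
rewrite /delta; case: eqP => _; first exact: alpha_ge0.
by rewrite lerBlDr lerDl alpha_ge0.
Qed.

(* The triangle inequality for delta through an intermediate point j; this is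
   the third SLS condition alpha_jj >= alpha_ji + alpha_kj - alpha_ki. *)
Lemma delta_triangle i j k : j != i -> j != k -> dl i k <= dl i j + dl j k.
Proof.
move=> ji jk; have [->|ik] := eqVneq i k.
  by rewrite {1}/delta eqxx addr_ge0 ?delta_ge0.
rewrite /delta (negbTE ik) eq_sym (negbTE ji) (negbTE jk).
case: alpha_SLS => _ /(_ j k i jk ji); rewrite !ge_max => /and3P[_ _ h]; lra.
Qed.

Variable S : {set 'I_K}.

(* The cost of leaving i fixed: alpha_ii, or a cheaper 2-cycle through i. *)
Definition beta i := \big[Num.min/alpha i i]_(j in S | j != i) (dl i j + dl j i).
Definition w i j := if i == j then beta i else dl i j.

Lemma beta_ge0 i : 0 <= beta i.
Proof. by apply: le_bigmin; rewrite ?alpha_ge0 // => j _; rewrite addr_ge0 ?delta_ge0. Qed.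

Lemma beta_le_diag i : beta i <= alpha i i.
Proof. exact: bigmin_le_id. Qed.

Lemma beta_le_pair i j : j \in S -> j != i -> beta i <= dl i j + dl j i.
Proof. by move=> jS ji; apply: bigmin_le_cond; rewrite jS. Qed.

(* w is triangular: through a fixed point this is beta_i >= 0, for a 2-cycle
   k -> i -> k it is the definition of beta_k, otherwise the delta triangle. *)
Lemma w_triangle : triangular S w.
Proof.
move=> k i l iS; rewrite /w; have [->|ki] := eqVneq k i.
  by move/esym/eqP <-; rewrite eqxx lerDl beta_ge0.
move/esym/negbT => il; rewrite (negbTE il).
have [->|kl] := eqVneq k l; first by rewrite /= beta_le_pair.
by rewrite delta_triangle // eq_sym.
Qed.

Lemma w_cycle_le_Delta c : is_cycle c -> {subset c <= S} ->
  \sum_(m <- c) w m (next c m) <= Delta alpha c.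
Proof.
case: c => [//|a [|b l]] /andP[_ Uc] _.
  by rewrite /= big_seq1 /= eqxx /w eqxx beta_le_diag.
rewrite [Delta _ _]/= big_seq [X in _ <= X]big_seq; apply: ler_sum => m mc.
by rewrite /w eq_sym (negbTE (next_neq Uc mc _)).
Qed.

Lemma DPTIN_le_partition d P : in_DPTIN alpha S d -> cyclic_partition S P ->
  \sum_(k in S) d k <= \sum_(c <- P) Delta alpha c.
Proof.
move=> [_ [_ d_cyc]] [cycP [UP memP]].
have -> : \sum_(k in S) d k = \sum_(k <- flatten P) d k.
  by rewrite big_uniq //; apply: eq_bigl => k; rewrite /= memP.
rewrite big_flatten /= big_seq [X in _ <= X]big_seq; apply: ler_sum => c cP.
apply: d_cyc; first exact: (allP cycP).
by move=> k kc; rewrite -memP; apply/flattenP; exists c.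
Qed.

Section OptimalFixedPoints.
Variable s : {perm 'I_K}.
Hypothesis s_on : perm_on S s.
Hypothesis s_fewest :
  forall t, perm_on S t -> cost S w t <= cost S w s -> (nfix S s <= nfix S t)%N.

Let exchange := fixed_point_exchange s_on s_fewest.

(* At a fixed point of s no 2-cycle is cheaper than alpha_ff: otherwise,
   exchanging the fixed point with the partner of the cheaper 2-cycle would
   contradict optimality of s. *)
Lemma beta_fixed f : f \in S -> s f = f -> beta f = alpha f f.
Proof.
move=> fS sf.
have [//|[j /andP[jS jf] bj]] : beta f = alpha f f \/
    exists2 j, (j \in S) && (j != f) & beta f = dl f j + dl j f.
  exact: bigmin_attained.
have fj : f != j by rewrite eq_sym.
have := exchange fS jS fj sf; rewrite /w eqxx (negbTE jf) bj.
have [sj|sj] := eqVneq (s j) j.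
  by rewrite sj (negbTE fj) => h; have := beta_ge0 j; lra.
have js : j != s j by rewrite eq_sym.
rewrite eq_sym (negbTE (fixed_not_image sf fj)) => h.
by have := delta_triangle jf js; lra.
Qed.

(* Two fixed points f, j could be merged into the 2-cycle (f j), whose weight
   delta_fj + delta_jf is at most alpha_ff + alpha_jj. *)
Lemma fixed_unique f j : f \in S -> j \in S -> s f = f -> s j = j -> f = j.
Proof.
move=> fS jS sf sj; apply/eqP/negP => /negP fj.
have := exchange fS jS fj sf.
rewrite sj /w !eqxx [j == f]eq_sym (negbTE fj) (beta_fixed jS sj) (beta_fixed fS sf).
by have := delta_le_diag j f; have := delta_le_diag f j; lra.
Qed.

(* Each orbit of s has Delta equal to its w-weight: long orbits have no
   fixed point, and trivial orbits have beta = alpha. *)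
Lemma Delta_orbit x : x \in S ->
  Delta alpha (orbit s x) = \sum_(m <- orbit s x) w m (s m).
Proof.
move=> xS; have Uo := orbit_uniq s x.
have [/orbit_singleton[-> sx]|E] := eqVneq (size (orbit s x)) 1%N.
  by rewrite /= big_seq1 sx /w eqxx beta_fixed.
have E2 : (1 < size (orbit s x))%N by rewrite ltn_neqAle eq_sym E size_orbit fingraph.order_gt0.
have -> : Delta alpha (orbit s x) = \sum_(m <- orbit s x) dl m (next (orbit s x) m).
  by move: E2; case: (orbit s x) => [|a [|b l]].
rewrite big_seq [RHS]big_seq; apply: eq_bigr => m mo.
have ne := next_neq Uo mo E2.
rewrite (nextE (cycle_orbit (@perm_inj _ s) x) mo) in ne *.
by rewrite /w eq_sym (negbTE ne).
Qed.

Lemma Delta_orbits : \sum_(c <- orbits S s) Delta alpha c = cost S w s.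
Proof.
rewrite /cost -(sum_orbits s_on (fun m => w m (s m))) /orbits !big_map.
apply: eq_big_seq => x; rewrite mem_filter mem_enum => /andP[_ xS].
exact: Delta_orbit.
Qed.

End OptimalFixedPoints.
End SLS.

Theorem lemma5 (R : realFieldType) (K : nat) (alpha : 'I_K -> 'I_K -> R) :
  in_SLS alpha ->
  forall S : {set 'I_K},
    exists P : seq (seq 'I_K),
      p_optimal alpha S P /\ (count (fun c => size c == 1%N) P <= 1)%N.
Proof.
move=> SLS S.
have [s [s_on s_min s_fewest]] := optimal_assignment_exists S (w alpha S).
have part : cyclic_partition S (orbits S s) :=
  conj (orbits_cycles S s) (conj (uniq_flatten_orbits S s) (mem_flatten_orbits s_on)).
have [d [d_out d_ge0 d_cyc d_sum]] := assignment_dual s_on s_min (@w_triangle _ _ _ SLS S).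
have d_in : in_DPTIN alpha S d.
  split=> [k kS|]; first by rewrite d_out.
  split=> [k _|c cyc_c c_S]; first exact: d_ge0.
  apply: le_trans (w_cycle_le_Delta alpha cyc_c c_S).
  by apply: d_cyc c_S; case/andP: cyc_c.
have value := Delta_orbits SLS s_on s_fewest.
exists (orbits S s); split; last first.
  exact: count_trivial_orbits (fixed_unique SLS s_on s_fewest).
split=> //; rewrite value; split; first by exists d.
by move=> d' d'_in; rewrite -value; apply: DPTIN_le_partition.
Qed.
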